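(* Let $s\in\{1/2,1,3/2,\dots\}$, $N=2s$, and let $C,D$ be linear operators on $\mathcal{H}_s$ with Majorana polynomials $p_C,p_D$. Then \[ \mathrm{Tr}(CD)=(N!)^{-2}\,p_C(\partial^a,\partial_a)\,p_D(z_a,z^a), \] where $p_C(\partial^a,\partial_a)$ is the constant-coefficient differential operator obtained from $p_C(z_1,z_2,z^1,z^2)$ by replacing each $z_a$ by $\partial^a=\partial/\partial z^a$ and each $z^a$ by $\partial_a=\partial/\partial z_a$. In particular, if $\mathrm{Tr}(CD)=0$ then $p_C(\partial^a,\partial_a)p_D(z)=0$.
   Context: $\mathcal{H}_s$ is the spin-$s$ Hilbert space with orthonormal $S_z$-eigenbasis $\{|s,m\rangle\}_{m=-s}^{s}$. Treat $z_1,z_2,z^1,z^2$ as four independent complex variables (formally $z^a=\overline{z_a}$), with $\partial_a z_b=\partial^a z^b=\delta_{ab}$, $\partial_a z^b=\partial^a z_b=0$. Define $\langle -\mathbf n_B|=\sum_{m=-s}^{s}(-1)^{s-m}\sqrt{\binom{2s}{s-m}}\,z_1^{s+m}z_2^{s-m}\langle s,m|$ and $|-\mathbf n_B\rangle=\sum_{m=-s}^{s}(-1)^{s-m}\sqrt{\binom{2s}{s-m}}\,(z^1)^{s+m}(z^2)^{s-m}|s,m\rangle$. The Majorana polynomial of an operator $C$ on $\mathcal{H}_s$ is $p_C(z)=\langle -\mathbf n_B|C|-\mathbf n_B\rangle$. *)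

From HB Require Import structures.
From mathcomp Require Import all_boot all_order all_algebra.
From mathcomp Require Import mpoly.
Set Implicit Arguments. Unset Strict Implicit. Unset Printing Implicit Defensive.
Import Order.TTheory GRing.Theory Num.Theory.
Local Open Scope ring_scope.

(* Variables of {mpoly F[4]}:  index 0 = z_1, 1 = z_2, 2 = z^1, 3 = z^2. *)
Definition vz1 : 'I_4 := @Ordinal 4 0 isT.
Definition vz2 : 'I_4 := @Ordinal 4 1 isT.
Definition vZ1 : 'I_4 := @Ordinal 4 2 isT.
Definition vZ2 : 'I_4 := @Ordinal 4 3 isT.

(* Spin s = N/2; basis |s,m> indexed by k = s + m in 'I_(N+1), so s - m = N - k.
   Coefficient (-1)^(s-m) sqrt(binom(2s, s-m)). *)
Definition majcoef (F : numClosedFieldType) (N : nat) (k : 'I_N.+1) : F :=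
  (-1) ^+ (N - k) * sqrtC ('C(N, N - k))%:R.

(* Majorana polynomial p_C(z) = <-n_B| C |-n_B> of an operator C on H_s
   (matrix in the basis |s,m>, row/column index k = s + m). *)
Definition majorana (F : numClosedFieldType) (N : nat) (C : 'M[F]_N.+1)
  : {mpoly F[4]} :=
  \sum_(j < N.+1) \sum_(k < N.+1)
     (majcoef F j * C j k * majcoef F k) *:
       ('X_vz1 ^+ j * 'X_vz2 ^+ (N - j) * 'X_vZ1 ^+ k * 'X_vZ2 ^+ (N - k)).

Definition swapvar (i : 'I_4) : 'I_4 :=
  if i == vz1 then vZ1 else if i == vz2 then vZ2
  else if i == vZ1 then vz1 else vz2.

(* p(∂^a, ∂_a) q : replace z_a by ∂/∂z^a and z^a by ∂/∂z_a in p, apply to q. *)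
Definition diffop (F : ringType) (p q : {mpoly F[4]}) : {mpoly F[4]} :=
  \sum_(m <- msupp p)
     p@_m *: mderivm [multinom m (swapvar i) | i < 4] q.

(* Write p_C = sum_(j,k) c_jk z_1^j z_2^(N-j) (z^1)^k (z^2)^(N-k), and likewise
   p_D.  The (j,k) term of p_C(d^a, d_a) differentiates by the swapped monomial
   (z^1)^j (z^2)^(N-j) z_1^k z_2^(N-k), which has the same total degree 2N as
   every monomial of p_D; so it kills all of them except the (k,j) one, which
   it sends to j!(N-j)!k!(N-k)!.  As c_jk carries sqrt(binom(N,j) binom(N,k)),
   these factorials turn binom(N,j) binom(N,k) into (N!)^2, and the surviving
   terms add up to (N!)^2 sum_(j,k) C_jk D_kj = (N!)^2 Tr(CD). *)
From HB Require Import structures.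
From mathcomp Require Import all_boot all_order all_algebra.
From mathcomp Require Import mpoly ssrcomplements bigenough ring zify.
Import Order.TTheory GRing.Theory Num.Theory BigEnough.
Local Open Scope ring_scope.

Lemma mderivmX_mdeg_eq (R : nzRingType) (n : nat) (m m' : 'X_{1..n}) :
  mdeg m = mdeg m' ->
  mderivm m ('X_[m'] : {mpoly R[n]}) =
    if m == m' then (\prod_(i < n) (m i)`!)%:R *: 1 else 0.
Proof.
move=> eq_deg; rewrite mderivmX; have [<-|ne_mm'] := eqVneq m m'.
  have -> : (m - m = 0)%MM by apply/mnmP => i; rewrite !mnmE subnn.
  rewrite mpolyX0; congr (_%:R *: _).
  by apply: eq_bigr => i _; rewrite ffactnn.
have [i lt_i] : exists i, (m' i < m i)%N.
  apply/existsP; apply: contra_neqT ne_mm' => /existsPn not_lt.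
  have le_mm' : (m <= m')%MM by apply/mnm_lepP => i; rewrite leqNgt not_lt.
  have /eqP : mdeg (m' - m) = 0%N.
    by apply/eqP; rewrite -(eqn_add2r (mdeg m)) -mdegD submK // eq_deg.
  by rewrite mdeg_eq0 -(eqm_add2r m) submK // add0m => /eqP->.
by rewrite (bigD1 i) //= ffact_small // mul0n scale0r.
Qed.

Definition swapmon (m : 'X_{1..4}) : 'X_{1..4} :=
  [multinom m (swapvar i) | i < 4].

Section DiffopLinear.
Variable R : nzRingType.
Implicit Types p q : {mpoly R[4]}.

Lemma diffopwE (b : nat) p q : (msize p <= b)%N ->
  diffop p q = \sum_(m : 'X_{1..4 < b}) p@_m *: mderivm (swapmon m) q.
Proof.
move=> le_pb; rewrite /diffop (big_mksub 'X_{1..4 < b}) //=; first last.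
- by move=> m /msize_mdeg_lt /leq_trans; apply.
- exact: msupp_uniq.
by rewrite big_rmcond //= => m /memN_msupp_eq0 ->; rewrite scale0r.
Qed.

Lemma diffop0 q : diffop 0 q = 0.
Proof. by rewrite /diffop msupp0 big_nil. Qed.

Lemma diffopD p1 p2 q : diffop (p1 + p2) q = diffop p1 q + diffop p2 q.
Proof.
pose_big_enough b.
  rewrite !(@diffopwE b) // -big_split; apply: eq_bigr => m _.
  by rewrite mcoeffD scalerDl.
by close.
Qed.

Lemma diffopZ c p q : diffop (c *: p) q = c *: diffop p q.
Proof.
pose_big_enough b.
  rewrite !(@diffopwE b) // scaler_sumr; apply: eq_bigr => m _.
  by rewrite mcoeffZ scalerA.
by close.
Qed.

Lemma diffopX m q : diffop 'X_[m] q = mderivm (swapmon m) q.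
Proof. by rewrite /diffop msuppX big_seq1 mcoeffX eqxx scale1r. Qed.

Lemma diffop_sum I (r : seq I) (P : pred I) (f : I -> {mpoly R[4]}) q :
  diffop (\sum_(i <- r | P i) f i) q = \sum_(i <- r | P i) diffop (f i) q.
Proof.
by apply: (big_morph (fun p => diffop p q)) => [p1 p2|];
  rewrite ?diffopD ?diffop0.
Qed.

End DiffopLinear.

Definition majmono (N j k : nat) : 'X_{1..4} :=
  [multinom nth 0%N [:: j; N - j; k; N - k] i | i < 4].

Lemma mpolyX_majmono (R : nzRingType) (N j k : nat) :
  'X_[majmono N j k]
  = 'X_vz1 ^+ j * 'X_vz2 ^+ (N - j) * 'X_vZ1 ^+ k * 'X_vZ2 ^+ (N - k)
  :> {mpoly R[4]}.
Proof.
rewrite !mpolyXn -!mpolyXD; congr 'X_[_].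
apply/mnmP => -[[|[|[|[|i]]]] lt_i4] //;
  by rewrite !mnmDE !mulmnE !mnm1E mnmE /= !(mul0n, mul1n, addn0, add0n).
Qed.

Lemma swapmon_majmono (N j k : nat) : swapmon (majmono N j k) = majmono N k j.
Proof. by apply/mnmP => -[[|[|[|[|i]]]] lt_i4] //; rewrite !mnmE. Qed.

Lemma eq_majmono (N j k j' k' : nat) :
  (majmono N j k == majmono N j' k') = (j == j') && (k == k').
Proof.
apply/eqP/andP => [eq_m|[/eqP-> /eqP->] //].
by split; apply/eqP;
  [move/mnmP/(_ vz1): eq_m | move/mnmP/(_ vZ1): eq_m]; rewrite !mnmE.
Qed.

Lemma mdeg_majmono (N j k : nat) :
  (j <= N)%N -> (k <= N)%N -> mdeg (majmono N j k) = (N + N)%N.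
Proof.
move=> le_jN le_kN; rewrite mdegE !big_ord_recl big_ord0 !mnmE /=; lia.
Qed.

Lemma prod_fact_majmono (N j k : nat) :
  (\prod_(i < 4) (majmono N j k i)`! = j`! * (N - j)`! * k`! * (N - k)`!)%N.
Proof. by rewrite !big_ord_recl big_ord0 !mnmE /= muln1 !mulnA. Qed.

Lemma mderivm_majmono (R : nzRingType) (N j k j' k' : nat) :
  (j <= N)%N -> (k <= N)%N -> (j' <= N)%N -> (k' <= N)%N ->
  mderivm (swapmon (majmono N j k)) ('X_[majmono N j' k'] : {mpoly R[4]}) =
    if (k == j') && (j == k') then (k`! * (N - k)`! * j`! * (N - j)`!)%:R *: 1
    else 0.
Proof.
move=> *; rewrite swapmon_majmono mderivmX_mdeg_eq ?mdeg_majmono //.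
by rewrite eq_majmono prod_fact_majmono.
Qed.

Lemma diffop_majmono_sums (R : nzRingType) (N : nat)
    (a b : 'I_N.+1 -> 'I_N.+1 -> R) :
  diffop (\sum_(j < N.+1) \sum_(k < N.+1) a j k *: 'X_[majmono N j k])
         (\sum_(j < N.+1) \sum_(k < N.+1) b j k *: 'X_[majmono N j k])
  = (\sum_(j < N.+1) \sum_(k < N.+1)
       a j k * b k j * (k`! * (N - k)`! * j`! * (N - j)`!)%:R)%:MP.
Proof.
have le_N (i : 'I_N.+1) : (i <= N)%N by rewrite -ltnS.
have pair_jk (j k : 'I_N.+1) : mderivm (swapmon (majmono N j k))
    (\sum_(j' < N.+1) \sum_(k' < N.+1) b j' k' *: 'X_[majmono N j' k'])
    = (b k j * (k`! * (N - k)`! * j`! * (N - j)`!)%:R)%:MP.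
  rewrite linear_sum (bigD1 k) //= [X in _ + X]big1 ?addr0; last first.
    move=> j' ne_j'k; rewrite linear_sum big1 // => k' _.
    rewrite linearZ /= mderivm_majmono //.
    by rewrite eq_sym (negbTE (ne_j'k : j' != k :> nat)) scaler0.
  rewrite linear_sum (bigD1 j) //= [X in _ + X]big1 ?addr0; last first.
    move=> k' ne_k'j; rewrite linearZ /= mderivm_majmono //.
    by rewrite eqxx eq_sym (negbTE (ne_k'j : k' != j :> nat)) scaler0.
  by rewrite linearZ /= mderivm_majmono // !eqxx scalerA alg_mpolyC.
rewrite diffop_sum rmorph_sum; apply: eq_bigr => j _.
rewrite diffop_sum rmorph_sum; apply: eq_bigr => k _.
by rewrite diffopZ diffopX pair_jk -mul_mpolyC -rmorphM mulrA.
Qed.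

Lemma majcoef_sqr (F : numClosedFieldType) (N : nat) (j : 'I_N.+1) :
  majcoef F j ^+ 2 * (j`! * (N - j)`!)%:R = N`!%:R.
Proof.
have le_jN : (j <= N)%N by rewrite -ltnS.
rewrite /majcoef exprMn exprAC sqrrN !expr1n mul1r sqrtCK bin_sub //.
by rewrite -natrM bin_fact.
Qed.

Lemma diffop_majorana (F : numClosedFieldType) (N : nat) (C D : 'M[F]_N.+1) :
  diffop (majorana C) (majorana D) = (N`!%:R ^+ 2 * \tr (C *m D))%:MP.
Proof.
have majoranaE (A : 'M[F]_N.+1) : majorana A = \sum_(j < N.+1) \sum_(k < N.+1)
    (majcoef F j * A j k * majcoef F k) *: 'X_[majmono N j k].
  by apply: eq_bigr => j _; apply: eq_bigr => k _; rewrite mpolyX_majmono.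
rewrite !majoranaE diffop_majmono_sums; congr _%:MP.
rewrite mulr_sumr; apply: eq_bigr => j _; rewrite mxE mulr_sumr.
apply: eq_bigr => k _; rewrite mulnAC -mulnA natrM.
transitivity (C j k * D k j * (majcoef F j ^+ 2 * (j`! * (N - j)`!)%:R)
                            * (majcoef F k ^+ 2 * (k`! * (N - k)`!)%:R)).
  by ring.
by rewrite !majcoef_sqr; ring.
Qed.

Theorem lemma2 (F : numClosedFieldType) (N : nat) (hN : (0 < N)%N)
  (C D : 'M[F]_N.+1) :
  ((\tr (C *m D))%:MP = (N`! %:R ^- 2) *: diffop (majorana C) (majorana D))
  /\ (\tr (C *m D) = 0 -> diffop (majorana C) (majorana D) = 0).
Proof.
have fact_neq0 : (N`!%:R : F) ^+ 2 != 0.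
  by rewrite expf_neq0 // pnatr_eq0 -lt0n fact_gt0.
rewrite diffop_majorana; split => [|tr0]; last by rewrite tr0 mulr0.
by rewrite -mul_mpolyC -rmorphM mulKf.
Qed.
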